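(* Let $N=2^n$. Every discrete bivariate Haar wavelet $\mathbf{h}^e_{p,q}$ satisfies $\|\nabla\mathbf{h}^e_{p,q}\|_1\le 8$.
   Context: Haar system: $H^0=\mathbf{1}_{[0,1)}$, $H^1=\mathbf{1}_{[0,1/2)}-\mathbf{1}_{[1/2,1)}$; for $e=(e_1,e_2)\in\{(0,1),(1,0),(1,1)\}$, $H^e(u,v)=H^{e_1}(u)H^{e_2}(v)$ and $H^e_{p,q}(x)=2^pH^e(2^px-q)$ for $p\ge0$, $q\in\mathbb{Z}^2\cap2^p[0,1)^2$. Identifying $\mathbf{X}\in\mathbb{C}^{N\times N}$ with the function on $[0,1)^2$ equal to $NX_{j,k}$ on $[\frac{j-1}{N},\frac jN)\times[\frac{k-1}{N},\frac kN)$, the discrete bivariate Haar wavelets $\mathbf{h}^e_{p,q}$ are the images corresponding to $H^e_{p,q}$, $0\le p\le n-1$. Discrete gradient: $\nabla\mathbf{X}$ collects all differences $X_{j+1,k}-X_{j,k}$ ($1\le j\le N-1$) and $X_{j,k+1}-X_{j,k}$ ($1\le k\le N-1$), and $\|\nabla\mathbf{X}\|_1$ is the sum of their absolute values. *)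

From mathcomp Require Import all_boot all_order all_algebra.
Set Implicit Arguments. Unset Strict Implicit. Unset Printing Implicit Defensive.
Import Order.TTheory GRing.Theory Num.Theory.
Local Open Scope ring_scope.

(* Univariate Haar functions: H^0 = 1_[0,1), H^1 = 1_[0,1/2) - 1_[1/2,1).
   The boolean index b encodes 0 (false) / 1 (true). *)
Definition haar1 (R : realFieldType) (b : bool) (t : R) : R :=
  if ~~ b then (if (0 <= t) && (t < 1) then 1 else 0)
  else if (0 <= t) && (t < 2^-1) then 1
  else if (2^-1 <= t) && (t < 1) then -1 else 0.

Definition haar2 (R : realFieldType) (e : bool * bool) (p q1 q2 : nat)
  (x1 x2 : R) : R :=
  2 ^+ p * haar1 e.1 (2 ^+ p * x1 - q1%:R) * haar1 e.2 (2 ^+ p * x2 - q2%:R).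

(* Discrete bivariate Haar wavelet h^e_{p,q} in R^{N x N}, N = 2^n:
   the image X with N * X_{j,k} = H^e_{p,q} on the cell
   [j/N,(j+1)/N) x [k/N,(k+1)/N) (0-indexed j,k); for p <= n-1 the function
   H^e_{p,q} is constant on each such cell, so we evaluate at its corner. *)
Definition haar_img (R : realFieldType) (n : nat) (e : bool * bool)
  (p q1 q2 : nat) : 'M[R]_(2 ^ n) :=
  \matrix_(j, k) ((2 ^ n)%:R^-1 *
     haar2 e p q1 q2 ((j : nat)%:R / (2 ^ n)%:R) ((k : nat)%:R / (2 ^ n)%:R)).

(* Entry access by natural-number indices (0 outside the range). *)
Definition mxat (R : realFieldType) (N : nat) (A : 'M[R]_N) (j k : nat) : R :=
  match @insub _ (fun i => i < N)%N 'I_N j, @insub _ (fun i => i < N)%N 'I_N k with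
  | Some j', Some k' => A j' k'
  | _, _ => 0
  end.

Definition grad_l1 (R : realFieldType) (N : nat) (A : 'M[R]_N) : R :=
  \sum_(0 <= j < N.-1) \sum_(0 <= k < N) `|mxat A j.+1 k - mxat A j k|
  + \sum_(0 <= j < N) \sum_(0 <= k < N.-1) `|mxat A j k.+1 - mxat A j k|.

(* On the N x N grid, h^e_{p,q} is separable: its entries are c F(j) G(k)
   with c = 2^(p-n), where F and G sample the two univariate Haar factors.
   Each factor lives on a block of 2^(n-p) consecutive indices, has absolute
   value at most 1 there, and is a combination of three unit steps with
   coefficients 1, -2, 1, so its total variation is at most 4. Each of the
   two directional parts of the gradient is c times the variation of one
   factor times the l1 norm of the other, hence at most 2^(p-n) * 4 * 2^(n-p)
   = 4. *)
From mathcomp Require Import all_boot all_order all_algebra.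
From mathcomp Require Import zify ring lra.
Import Order.TTheory GRing.Theory Num.Theory.
Local Open Scope ring_scope.

Lemma sum_interval_indicator a b M : (a <= b)%N ->
  (\sum_(0 <= k < M) ((a <= k) && (k < b)) = minn M b - minn M a)%N.
Proof.
move=> le_ab; elim: M => [|M IH]; first by rewrite big_geq // !min0n.
by rewrite big_nat_recr //= IH; case: (leqP a M); case: (leqP b M) => /=; lia.
Qed.

Section DiscreteHaar.
Local Set Implicit Arguments.
Local Unset Strict Implicit.
Variable R : realFieldType.

Definition variation (F : nat -> R) (M : nat) : R :=
  \sum_(0 <= j < M) `|F j.+1 - F j|.

Definition sum_abs (F : nat -> R) (M : nat) : R := \sum_(0 <= k < M) `|F k|.

Lemma mxatE N (A : 'M[R]_N) j k (lt_jN : (j < N)%N) (lt_kN : (k < N)%N) :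
  mxat A j k = A (Ordinal lt_jN) (Ordinal lt_kN).
Proof.
rewrite /mxat; case: insubP => [j' _ j'E|]; last by rewrite lt_jN.
case: insubP => [k' _ k'E|]; last by rewrite lt_kN.
by congr (A _ _); apply: val_inj.
Qed.

Lemma grad_l1_separable N (A : 'M[R]_N) (c : R) (F G : nat -> R) : 0 <= c ->
  (forall j k, (j < N)%N -> (k < N)%N -> mxat A j k = c * F j * G k) ->
  grad_l1 A = c * (variation F N.-1 * sum_abs G N + variation G N.-1 * sum_abs F N).
Proof.
move=> c_ge0 AE; rewrite /grad_l1 mulrDr [variation G _ * _]mulrC !mulrA.
rewrite /variation /sum_abs; congr (_ + _);
  rewrite [c * _]mulr_sumr mulr_suml; apply: eq_big_nat => j /andP[_ ltj];
  rewrite mulr_sumr; apply: eq_big_nat => k /andP[_ ltk]; rewrite !AE; try lia.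
- by rewrite -!mulrA -mulrBr -mulrBl !normrM ger0_norm.
- by rewrite -mulrBr normrM normrM ger0_norm.
Qed.

Definition heaviside (t j : nat) : R := (t <= j)%N%:R.

(* H^b, rescaled to [a, a + 2h) and sampled at the integers. *)
Definition haar_seq (b : bool) (a h j : nat) : R :=
  heaviside a j - 2 * heaviside (if b then a + h else a + 2 * h) j
  + heaviside (a + 2 * h) j.

Lemma variation_heaviside t M : variation (heaviside t) M <= 1.
Proof.
have mono j : heaviside t j <= heaviside t j.+1.
  by rewrite ler_nat; case: (leqP t j) => // /leqW ->.
rewrite /variation (eq_bigr (fun j => heaviside t j.+1 - heaviside t j));
  last by move=> j _; rewrite ger0_norm // subr_ge0.
rewrite telescope_sumr // /heaviside.
by case: (t <= M)%N; case: (t <= 0)%N => /=; lra.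
Qed.

Lemma variation_haar_seq b a h M : variation (haar_seq b a h) M <= 4.
Proof.
pose t1 := if b then a + h else a + 2 * h.
have tri j : `|haar_seq b a h j.+1 - haar_seq b a h j| <=
    `|heaviside a j.+1 - heaviside a j| + 2 * `|heaviside t1 j.+1 - heaviside t1 j|
    + `|heaviside (a + 2 * h) j.+1 - heaviside (a + 2 * h) j|.
  have -> : haar_seq b a h j.+1 - haar_seq b a h j =
      (heaviside a j.+1 - heaviside a j) - 2 * (heaviside t1 j.+1 - heaviside t1 j)
      + (heaviside (a + 2 * h) j.+1 - heaviside (a + 2 * h) j).
    by rewrite /haar_seq -/t1; ring.
  apply: le_trans (ler_normD _ _) _; rewrite lerD2r.
  by apply: le_trans (ler_normB _ _) _; rewrite normrM ger0_norm.
rewrite /variation (le_trans (ler_sum _ (fun j _ => tri j))) // !big_split /= -mulr_sumr.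
have := variation_heaviside a M; have := variation_heaviside t1 M.
have := variation_heaviside (a + 2 * h) M; rewrite /variation; lra.
Qed.

Lemma norm_haar_seq_le b a h k :
  `|haar_seq b a h k| <= ((a <= k) && (k < a + 2 * h))%N%:R.
Proof.
rewrite ler_norml /haar_seq /heaviside.
case: b; [case: (leqP (a + h) k) => ?|];
  case: (leqP a k) => ?; case: (leqP (a + 2 * h) k) => ? /=; try lia; lra.
Qed.

Lemma sum_abs_haar_seq b a h M : sum_abs (haar_seq b a h) M <= (2 * h)%:R.
Proof.
apply: le_trans (ler_sum _ (fun k _ => norm_haar_seq_le b a h k)) _.
by rewrite -natr_sum ler_nat sum_interval_indicator; lia.
Qed.

Lemma haar1_sample b a h k : (0 < h)%N ->
  haar1 b ((k%:R - a%:R) / (2 * h)%:R) = haar_seq b a h k.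
Proof.
move=> h_gt0; have h2_gt0 : 0 < (2 * h)%:R :> R by rewrite ltr0n; lia.
set x := _ / _.
have x_ge0 : (0 <= x) = (a <= k)%N by rewrite pmulr_lge0 ?invr_gt0 // subr_ge0 ler_nat.
have x_lt1 : (x < 1) = (k < a + 2 * h)%N.
  by rewrite ltr_pdivrMr // mul1r ltrBlDr -natrD ltr_nat addnC.
have x_lthalf : (x < 2^-1) = (k < a + h)%N.
  rewrite ltr_pdivrMr // natrM mulrA mulVf ?pnatr_eq0 // mul1r.
  by rewrite ltrBlDr -natrD ltr_nat addnC.
rewrite /haar1 /haar_seq /heaviside x_ge0 x_lt1 leNgt x_lthalf.
case: b => /=; [case: (leqP (a + h) k) => ?|];
  case: (leqP a k) => ?; case: (leqP (a + 2 * h) k) => ? /=; try lia; ring.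
Qed.

Lemma mxat_haar_img n e p q1 q2 h : (2 ^ n = 2 ^ p * (2 * h))%N ->
  forall j k, (j < 2 ^ n)%N -> (k < 2 ^ n)%N ->
  mxat (haar_img R n e p q1 q2) j k =
  (2 * h)%:R^-1 * haar_seq e.1 (q1 * (2 * h)) h j * haar_seq e.2 (q2 * (2 * h)) h k.
Proof.
move=> nE j k lt_j lt_k; have h_gt0 : (0 < h)%N by move: (expn_gt0 2 n); rewrite nE; lia.
have h_neq0 : h%:R != 0 :> R by rewrite pnatr_eq0 -lt0n.
have rescale i q : 2 ^+ p * (i%:R / (2 ^ n)%:R) - q%:R =
    (i%:R - (q * (2 * h))%:R) / (2 * h)%:R :> R.
  by rewrite nE !natrM natrX; field; rewrite h_neq0 expf_neq0 ?pnatr_eq0.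
rewrite (mxatE _ lt_j lt_k) mxE /haar2 /= !rescale !haar1_sample // nE !natrM natrX.
by field; rewrite h_neq0 expf_neq0 ?pnatr_eq0.
Qed.
End DiscreteHaar.

Theorem lemma10 (R : realFieldType) (n : nat) (e : bool * bool)
  (he : e != (false, false)) (p q1 q2 : nat)
  (hp : (p < n)%N) (hq1 : (q1 < 2 ^ p)%N) (hq2 : (q2 < 2 ^ p)%N) :
  grad_l1 (haar_img R n e p q1 q2) <= 8.
Proof.
pose h := (2 ^ (n - p.+1))%N.
have nE : (2 ^ n = 2 ^ p * (2 * h))%N by rewrite -expnS -expnD; congr expn; lia.
have h2_gt0 : 0 < (2 * h)%:R :> R by rewrite ltr0n muln_gt0 expn_gt0.
rewrite (grad_l1_separable _ (mxat_haar_img _ e q1 q2 nE)); last first.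
  by rewrite invr_ge0 ltW.
have bound b b' q q' : variation (haar_seq R b (q * (2 * h)) h) (2 ^ n).-1 *
    sum_abs (haar_seq R b' (q' * (2 * h)) h) (2 ^ n) <= 4 * (2 * h)%:R.
  by apply: ler_pM; rewrite ?variation_haar_seq ?sum_abs_haar_seq ?sumr_ge0.
by rewrite ler_pdivrMl //; apply: le_trans (lerD (bound _ _ _ _) (bound _ _ _ _)) _; lra.
Qed.
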